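(* Let $H$ be a separable Hilbert space, let $L\subset H$ be compact, let $K\subset H$ be a convex self-dual cone and let $v\in K$. Then there is $D>0$ with the following property. For all $a<b$ and all curves $c\in C^2([a,b],L)$ parametrized by arc length with $c'([a,b])\subset v-K$ and $c''([a,b])\subset K$, one has $l(c)\le D$.
   Context: A cone $K$ is self-dual if $K=\{u\in H:\langle u,k\rangle\ge0\ \forall k\in K\}$. $v-K=\{v-k:k\in K\}$. $l(c)$ is the length of $c$. *)

From HB Require Import structures.
From mathcomp Require Import all_boot all_order all_algebra.
From mathcomp Require Import all_classical all_reals all_analysis.
Set Implicit Arguments. Unset Strict Implicit. Unset Printing Implicit Defensive.
Import Order.TTheory GRing.Theory Num.Theory.
Import numFieldNormedType.Exports.
Local Open Scope classical_set_scope.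
Local Open Scope ring_scope.

(* ip is a (real) inner product on V inducing the norm of V. Together with
   V : completeNormedModType R this makes (V, ip) a real Hilbert space. *)
Definition is_inner_product (R : realType) (V : normedModType R)
  (ip : V -> V -> R) : Prop :=
  [/\ (forall x y, ip x y = ip y x),
      (forall (a : R) (x y z : V), ip (a *: x + y) z = a * ip x z + ip y z)
    & (forall x, ip x x = `|x| ^+ 2)].

Definition separable (T : topologicalType) : Prop :=
  exists D : set T, countable D /\ closure D = setT.

Definition convex_cone (R : realType) (V : normedModType R) (K : set V) : Prop :=
  (forall (t : R) x, 0 <= t -> K x -> K (t *: x)) /\
  (forall (t : R) x y, 0 <= t <= 1 -> K x -> K y -> K (t *: x + (1 - t) *: y)).

Definition self_dual (R : realType) (V : normedModType R)
  (ip : V -> V -> R) (K : set V) : Prop :=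
  K = [set u | forall k, K k -> 0 <= ip u k].

Definition deriv_on (R : realType) (V : normedModType R) (a b : R)
  (f f' : R -> V) : Prop :=
  forall t, `[a, b]%classic t ->
    (fun s => (s - t)^-1 *: (f s - f t)) @ within (`[a, b]%classic `\ t) (nbhs t)
      --> f' t.

Definition C2_on (R : realType) (V : normedModType R) (a b : R)
  (c c1 c2 : R -> V) : Prop :=
  [/\ {within `[a, b]%classic, continuous c}, deriv_on a b c c1,
      {within `[a, b]%classic, continuous c1}, deriv_on a b c1 c2
    & {within `[a, b]%classic, continuous c2}].

Definition curve_length (R : realType) (V : normedModType R) (a b : R)
  (c1 : R -> V) : R :=
  Rintegral (@lebesgue_measure R) `[a, b]%classic (fun t => `|c1 t|).

From HB Require Import structures.
From mathcomp Require Import all_boot all_order all_algebra.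
From mathcomp Require Import all_classical all_reals all_analysis.
From mathcomp Require Import ring lra.
Import Order.TTheory GRing.Theory Num.Theory.
Import numFieldNormedType.Exports.
Local Open Scope classical_set_scope.
Local Open Scope ring_scope.
Set Implicit Arguments. Unset Strict Implicit. Unset Printing Implicit Defensive.

(* Put drift(r) := <c'(r), v>.  Since c'' lies in the self-dual cone K,
   r |-> <c'(r), w> is nondecreasing for every w in K.  For w = v this makes
   the drift nondecreasing, and |c'| = 1 confines it to [-|v|, |v|].  For
   w = v - c'(r) it gives <c'(s), c'(r)> >= 1 - (drift r - drift s) when s <= r.
   Hence on a time interval [s, t] over which the drift grows by at most 1/2,
   r |-> <c(r), c'(s)> grows at rate at least 1/2; as c stays in a ball of
   radius M around 0, t - s <= 4M.  By the intermediate value theorem [a, b]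
   splits into at most 4|v| + 1 such intervals. *)

Section DerivOn.
Variable R : realType.

Lemma deriv_on_subitv (V : normedModType R) (a b s t : R) (f f' : R -> V) :
  a <= s -> t <= b -> deriv_on a b f f' -> deriv_on s t f f'.
Proof.
move=> a_le_s t_le_b df x x_st.
have st_sub : `[s, t] `<=` `[a, b] by apply: subset_itv; rewrite bnd_simp.
apply: cvg_trans (df x (st_sub x x_st)).
have sub : `[s, t] `\ x `<=` `[a, b] `\ x by move=> y [/st_sub].
by move=> P; apply: (within_subset _ sub).
Qed.

Lemma deriv_on_is_derive (a b : R) (f f' : R -> R) x :
  deriv_on a b f f' -> x \in `]a, b[ -> is_derive x 1 f (f' x).
Proof.
move=> df x_ab.
have x_in : `[a, b]%classic x by rewrite /= in_itv /= !ltW ?(itvP x_ab).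
suff cvg_f' : h^-1 *: ((f \o shift x) (h *: 1) - f x) @[h --> 0^'] --> f' x.
  by apply: DeriveDef; [apply/cvg_ex; exists (f' x) | exact: cvg_lim].
apply/cvgrPdist_lt => e e_gt0.
have /cvgrPdist_lt/(_ e e_gt0) := df x x_in.
rewrite near_withinE => /nbhs_ballP[d /= d_gt0 Hd].
apply/nbhs_ballP.
exists (Num.min d (Num.min (x - a) (b - x))).
  by rewrite /= !lt_min d_gt0 !subr_gt0 !(itvP x_ab).
move=> h /=; rewrite /ball /= sub0r normrN !lt_min => /and3P[hd hxa hbx] h_neq0.
rewrite /shift /= [h *: 1]mulr1.
have := Hd (h + x); rewrite addrK; apply; first by rewrite /ball /= distrC addrK.
split.
  move: hxa hbx; rewrite /= in_itv /= !ltr_norml => /andP[? ?] /andP[? ?].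
  apply/andP; split; lra.
by move=> /(canRL (addrK x)); rewrite subrr; apply/eqP.
Qed.

Lemma deriv_on_nondecreasing (a b : R) (f f' : R -> R) :
  {within `[a, b], continuous f} -> deriv_on a b f f' ->
  (forall x, `[a, b]%classic x -> 0 <= f' x) ->
  forall x y, a <= x -> x <= y -> y <= b -> f x <= f y.
Proof.
move=> cf df f'_ge0; apply: ger0_derive1_ndecr => // x x_ab.
  by have [] := deriv_on_is_derive df x_ab.
have f'_x := deriv_on_is_derive df x_ab.
rewrite derive1E derive_val.
by apply: f'_ge0; rewrite /= in_itv /= !ltW ?(itvP x_ab).
Qed.

Lemma deriv_on_slope_ge (a b k : R) (f f' : R -> R) :
  {within `[a, b], continuous f} -> deriv_on a b f f' ->
  (forall x, `[a, b]%classic x -> k <= f' x) ->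
  forall x y, a <= x -> x <= y -> y <= b -> k * (y - x) <= f y - f x.
Proof.
move=> cf df k_le_f' x y ax xy yb.
have cg : {within `[a, b], continuous (fun r => f r - r * k)}.
  have -> : (fun r => f r - r * k) = f + ( *%R^~ (- k)).
    by apply/funext => r; rewrite -mulrN.
  move=> r; apply: continuousD; first exact: cf.
  exact: (continuous_subspaceT (@scalel_continuous _ _ (- k))).
have dg : deriv_on a b (fun r => f r - r * k) (fun r => f' r - k).
  move=> t t_in; apply: cvg_trans (cvgB (df t t_in) (cvg_cst k)).
  apply: near_eq_cvg; rewrite near_withinE; apply: nearW => s [_ /eqP s_neq_t].
  have st_neq0 : s - t != 0 by rewrite subr_eq0.
  change ((s - t)^-1 * (f s - f t) - k = (s - t)^-1 * (f s - s * k - (f t - t * k))).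
  by field.
suff : f x - x * k <= f y - y * k by lra.
by apply: deriv_on_nondecreasing cg dg _ _ _ ax xy yb => r /k_le_f'; rewrite subr_ge0.
Qed.

End DerivOn.

Section InnerProduct.
Variables (R : realType) (V : normedModType R) (ip : V -> V -> R).
Hypothesis ipP : is_inner_product ip.

Lemma ip0l z : ip 0 z = 0.
Proof. by have [_ ipDZl _] := ipP; have := ipDZl 1 0 0 z; rewrite scale1r addr0; lra. Qed.

Lemma ipZl a x z : ip (a *: x) z = a * ip x z.
Proof. by have [_ ipDZl _] := ipP; rewrite -[a *: x]addr0 ipDZl ip0l addr0. Qed.

Lemma ipBl x y z : ip (x - y) z = ip x z - ip y z.
Proof.
have [_ ipDZl _] := ipP.
by rewrite -scaleN1r addrC ipDZl mulN1r addrC.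
Qed.

Lemma ipBr x y z : ip x (y - z) = ip x y - ip x z.
Proof. by have [ipC _ _] := ipP; rewrite ipC ipBl !(ipC x). Qed.

Lemma normr_ip_le x y : `|ip x y| <= `|x| * `|y|.
Proof.
have [ipC _ ipN] := ipP.
have [->|y_neq0] := eqVneq y 0; first by rewrite ipC ip0l !normr0 mulr0.
set p := ip x y.
have ip_ww : ip (`|y| ^+ 2 *: x - p *: y) (`|y| ^+ 2 *: x - p *: y)
    = `|y| ^+ 2 * (`|y| ^+ 2 * `|x| ^+ 2 - p ^+ 2).
  rewrite !(ipBl, ipBr, ipZl) !(ipC _ (_ *: _)) !ipZl !ipN (ipC y x) -/p; ring.
have y2_gt0 : 0 < `|y| ^+ 2 by rewrite exprn_gt0 ?normr_gt0.
have : p ^+ 2 <= (`|x| * `|y|) ^+ 2.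
  rewrite exprMn mulrC -subr_ge0 -(pmulr_rge0 _ y2_gt0) -ip_ww ipN.
  exact: exprn_ge0.
by rewrite -real_normK ?num_real // ler_sqr ?nnegrE ?mulr_ge0.
Qed.

Lemma continuous_ipl u : continuous (ip^~ u).
Proof.
move=> x; apply/cvgrPdist_lt => e e_gt0; apply/nbhs_ballP.
have u1_gt0 : 0 < `|u| + 1 by rewrite ltr_wpDl.
exists (e / (`|u| + 1)); first by rewrite /= divr_gt0.
move=> y; rewrite -ball_normE /= => xy_lt.
rewrite -ipBl; apply: le_lt_trans (normr_ip_le _ _) _.
rewrite -[e](divfK (lt0r_neq0 u1_gt0)).
apply: le_lt_trans (ler_wpM2r _ (ltW xy_lt)) _ => //.
by rewrite ltr_pM2l ?divr_gt0 // ltrDl.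
Qed.

Lemma deriv_on_ipl a b (c c' : R -> V) u :
  deriv_on a b c c' -> deriv_on a b (fun r => ip (c r) u) (fun r => ip (c' r) u).
Proof.
move=> dc t t_in.
have := cvg_comp _ (ip^~ u) (dc t t_in) (@continuous_ipl u (c' t)).
by apply: cvg_trans; apply: near_eq_cvg; apply: nearW => s; rewrite /= ipZl ipBl.
Qed.

Lemma continuous_on_ipl a b (c : R -> V) u :
  {within `[a, b], continuous c} -> {within `[a, b], continuous (fun r => ip (c r) u)}.
Proof. by move=> cc x; apply: continuous_comp (cc x) (@continuous_ipl u _). Qed.

End InnerProduct.

Lemma curve_length_unit_speed (R : realType) (V : normedModType R) (a b : R)
    (c' : R -> V) :
  a <= b -> (forall t, `[a, b]%classic t -> `|c' t| = 1) ->
  curve_length a b c' = b - a.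
Proof.
move=> ab unit_c'; rewrite /curve_length.
rewrite (@eq_Rintegral _ _ _ _ _ (fun _ => 1)); last first.
  by move=> t; rewrite inE => /unit_c'.
rewrite Rintegral_cst ?mul1r; last exact: measurable_itv.
have := @lebesgue_measure_itv R `[a, b]; rewrite /= lte_fin => ->.
have [//|ba] := ltP a b.
have -> : b = a by apply/le_anti; rewrite ba ab.
by rewrite subrr.
Qed.

Lemma compact_norm_le (R : realType) (V : normedModType R) (A : set V) :
  compact A -> exists M, 0 <= M /\ forall x, A x -> `|x| <= M.
Proof.
move=> /compact_bounded[M [_ HM]].
exists (`|M| + 1); split; first by rewrite addr_ge0.
by move=> x Ax; apply: HM => //; rewrite (le_lt_trans (ler_norm M)) // ltrDl.
Qed.

Lemma self_dual_ip_ge0 (R : realType) (V : normedModType R) (ip : V -> V -> R)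
    (K : set V) x y :
  self_dual ip K -> K x -> K y -> 0 <= ip x y.
Proof. by move=> K_sd; rewrite {1}K_sd; apply. Qed.

Section UnitSpeedCurve.
Variables (R : realType) (V : normedModType R) (ip : V -> V -> R).
Hypothesis ipP : is_inner_product ip.
Variables (K : set V) (v : V).
Hypothesis K_ip_ge0 : forall x y, K x -> K y -> 0 <= ip x y.
Hypothesis Kv : K v.
Variables (a b M : R) (c c' c'' : R -> V).
Hypothesis c_cont : {within `[a, b], continuous c}.
Hypothesis c_deriv : deriv_on a b c c'.
Hypothesis c'_cont : {within `[a, b], continuous c'}.
Hypothesis c'_deriv : deriv_on a b c' c''.
Hypothesis c'_unit : forall r, `[a, b]%classic r -> `|c' r| = 1.
Hypothesis c'_in : forall r, `[a, b]%classic r -> K (v - c' r).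
Hypothesis c''_in : forall r, `[a, b]%classic r -> K (c'' r).
Hypothesis c_le : forall r, `[a, b]%classic r -> `|c r| <= M.

Let in_ab r : a <= r -> r <= b -> `[a, b]%classic r.
Proof. by move=> ar rb; rewrite /= in_itv /= ar rb. Qed.

Lemma ip_velocity_nondecreasing w r1 r2 :
  K w -> a <= r1 -> r1 <= r2 -> r2 <= b -> ip (c' r1) w <= ip (c' r2) w.
Proof.
move=> Kw.
have := deriv_on_nondecreasing (continuous_on_ipl ipP (u := w) c'_cont)
  (deriv_on_ipl ipP (u := w) c'_deriv).
apply=> r r_in; apply: K_ip_ge0 => //; exact: c''_in.
Qed.

Let drift r := ip (c' r) v.

Lemma velocity_ip_ge s r : a <= s -> s <= r -> r <= b ->
  1 - (drift r - drift s) <= ip (c' s) (c' r).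
Proof.
move=> a_le_s s_le_r r_le_b.
have r_in := in_ab (le_trans a_le_s s_le_r) r_le_b.
have := ip_velocity_nondecreasing (c'_in r_in) a_le_s s_le_r r_le_b.
have [_ _ ipN] := ipP.
by rewrite !(ipBr ipP) ipN c'_unit // /drift; lra.
Qed.

Lemma drift_nondecreasing r1 r2 :
  a <= r1 -> r1 <= r2 -> r2 <= b -> drift r1 <= drift r2.
Proof. exact: ip_velocity_nondecreasing. Qed.

Lemma time_le_of_small_drift s t : a <= s -> s <= t -> t <= b ->
  drift t - drift s <= 1 / 2 -> t - s <= 4 * M.
Proof.
move=> a_le_s s_le_t t_le_b small_drift.
have [ipC _ _] := ipP.
have st_sub : `[s, t] `<=` `[a, b] by apply: subset_itv; rewrite bnd_simp.
have s_in := in_ab a_le_s (le_trans s_le_t t_le_b).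
have t_in := in_ab (le_trans a_le_s s_le_t) t_le_b.
have half_le : forall r, `[s, t]%classic r -> 1 / 2 <= ip (c' r) (c' s).
  move=> r /[dup] /st_sub /= r_in; rewrite in_itv /= => /andP[s_le_r r_le_t].
  have := velocity_ip_ge a_le_s s_le_r (le_trans r_le_t t_le_b).
  have := drift_nondecreasing (le_trans a_le_s s_le_r) r_le_t t_le_b.
  by rewrite ipC; lra.
have ip_c_cont := continuous_on_ipl ipP (u := c' s) (continuous_subspaceW st_sub c_cont).
have ip_c_deriv := deriv_on_ipl ipP (u := c' s) (deriv_on_subitv a_le_s t_le_b c_deriv).
have := deriv_on_slope_ge ip_c_cont ip_c_deriv half_le (lexx s) s_le_t (lexx t).
have : ip (c t) (c' s) - ip (c s) (c' s) <= 2 * M.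
  rewrite -(ipBl ipP); apply: le_trans (ler_norm _) _.
  apply: le_trans (normr_ip_le ipP _ _) _; rewrite c'_unit // mulr1.
  apply: le_trans (ler_normB _ _) _.
  by have := c_le s_in; have := c_le t_in; lra.
lra.
Qed.

Lemma time_le_of_drift n s t : a <= s -> s <= t -> t <= b ->
  drift t - drift s <= n%:R / 2 -> t - s <= 4 * M * n.+1%:R.
Proof.
elim: n s => [|n IHn] s a_le_s s_le_t t_le_b drift_le.
  by rewrite mulr1; apply: time_le_of_small_drift => //; lra.
have s_in := in_ab a_le_s (le_trans s_le_t t_le_b).
have M_ge0 : 0 <= M := le_trans (normr_ge0 _) (c_le s_in).
have Mn_ge0 : 0 <= 4 * M * n.+1%:R by rewrite !mulr_ge0.
rewrite mulrS in drift_le; rewrite [n.+2%:R]mulrS mulrDr mulr1.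
have [small_drift|] := lerP (drift t - drift s) (1 / 2).
  by have := time_le_of_small_drift a_le_s s_le_t t_le_b small_drift; lra.
move=> large_drift.
have drift_cont : {within `[s, t], continuous drift}.
  apply: continuous_subspaceW (continuous_on_ipl ipP c'_cont).
  by apply: subset_itv; rewrite bnd_simp.
have [r] : exists2 r, r \in `[s, t] & drift r = drift s + 1 / 2.
  apply: IVT => //; rewrite ge_min le_max -/(drift s) -/(drift t).
  by apply/andP; split; apply/orP; [left | right]; lra.
rewrite in_itv /= => /andP[s_le_r r_le_t] drift_r.
have drift_sr : drift r - drift s <= 1 / 2 by lra.
have drift_rt : drift t - drift r <= n%:R / 2 by lra.
have := time_le_of_small_drift a_le_s s_le_r (le_trans r_le_t t_le_b) drift_sr.
have := IHn r (le_trans a_le_s s_le_r) r_le_t t_le_b drift_rt.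
lra.
Qed.

Lemma unit_speed_curve_time_le n : a <= b -> 4 * `|v| <= n%:R ->
  b - a <= 4 * M * n.+1%:R.
Proof.
move=> a_le_b v_le_n; apply: time_le_of_drift => //.
have drift_le r : `[a, b]%classic r -> `|drift r| <= `|v|.
  by move=> r_in; apply: le_trans (normr_ip_le ipP _ _) _; rewrite c'_unit ?mul1r.
have := drift_le a (in_ab (lexx a) a_le_b); have := drift_le b (in_ab a_le_b (lexx b)).
by rewrite !ler_norml; lra.
Qed.

End UnitSpeedCurve.

Unset Implicit Arguments.

Theorem theorem7 (R : realType) (H : completeNormedModType R)
  (ip : H -> H -> R) (Hip : is_inner_product ip) (Hsep : separable H)
  (L : set H) (K : set H) (v : H) :
  compact L -> convex_cone K -> self_dual ip K -> K v ->
  exists D : R, 0 < D /\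
    forall (a b : R) (c c1 c2 : R -> H),
      a < b ->
      C2_on a b c c1 c2 ->
      c @` `[a, b]%classic `<=` L ->
      (forall t, `[a, b]%classic t -> `|c1 t| = 1) ->
      c1 @` `[a, b]%classic `<=` [set v - k | k in K] ->
      c2 @` `[a, b]%classic `<=` K ->
      curve_length a b c1 <= D.
Proof.
move=> /compact_norm_le[M [M_ge0 L_le]] _ K_sd Kv.
pose n := (Num.Def.truncn (4 * `|v|)).+1.
have v_le_n : 4 * `|v| <= n%:R by rewrite ltW // truncnS_gt.
exists (4 * M * n.+1%:R + 1); split.
  by rewrite ltr_wpDl // !mulr_ge0.
move=> a b c c1 c2 /ltW a_le_b [c_cont c_deriv c1_cont c1_deriv _] cL c1_unit c1_in c2_in.
rewrite curve_length_unit_speed //.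
suff : b - a <= 4 * M * n.+1%:R by lra.
apply: (unit_speed_curve_time_le Hip (K := K) _ Kv c_cont c_deriv c1_cont c1_deriv) => //.
- by move=> x y; apply: self_dual_ip_ge0.
- by move=> r r_in; have [k Kk <-] := c1_in _ (imageP _ r_in); rewrite opprB addrC subrK.
- by move=> r r_in; apply: c2_in; exists r.
- by move=> r r_in; apply: L_le; apply: cL; exists r.
Qed.
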